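(* Let $T\colon\mathscr C\to\mathscr C$ be a homeomorphism of the Cantor set with exactly one fixed point $x^0$ such that for every $x\ne x^0$ and every $m\in\mathbb N$ the set $\{T^{mk}(x):k\in\mathbb Z\}$ is dense in $\mathscr C$. Let $\mathscr C=A\sqcup B$ be a partition into clopen sets with $x^0\in A$. Let $\hat X=A\times\{0,1\}\sqcup B\times\{0\}$ and define $f\colon\hat X\to\hat X$ by $f(x,i)=(T(x),1)$ if $i=0$ and $T(x)\in A$, and $f(x,i)=(T(x),0)$ otherwise. For $x\in\mathscr C$ let $N(x,B)=\min\{k\in\mathbb N_0: T^{-k}(x)\in B\}$ (with $N(x,B)=\infty$ if no such $k$ exists), let $U=\{x\in\mathscr C: N(x,B)<\infty\}$, and let $X=\overline{\{(x,N(x,B)\bmod 2):x\in U\}}$ (closure in $\hat X$). Then for every $m\in\mathbb N$, $X$ is the least closed subset of $\hat X$ that contains $B\times\{0\}$ and is $f^m$-invariant (i.e. satisfies $f^m(S)\subseteq S$).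
   Context: $\mathscr C$ denotes the Cantor set; $\mathbb N_0=\{0,1,2,\dots\}$. *)

(* The Cantor set is modelled by [cantor_space]
   (bool^nat with the product topology), which is homeomorphic to the
   middle-thirds Cantor set; the statement is purely topological. *)
From HB Require Import structures.
From mathcomp Require Import all_boot all_order all_algebra.
From mathcomp Require Import all_classical all_reals all_analysis.
Set Implicit Arguments. Unset Strict Implicit. Unset Printing Implicit Defensive.
Import Order.TTheory GRing.Theory Num.Theory.
Local Open Scope classical_set_scope.

Definition zpow {X : Type} (T Tinv : X -> X) (z : int) : X -> X :=
  match z with
  | Posz n => iter n T
  | Negz n => iter n.+1 Tinv
  end.

(* Xhat = A x {0,1} ⊔ B x {0}, with {0,1} coded as bool (0 = false, 1 = true) *)
Definition Xhat (A B : set cantor_space) : set (cantor_space * bool) :=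
  [set p | A p.1 \/ (B p.1 /\ p.2 = false)].

Definition fmapX (T : cantor_space -> cantor_space) (A : set cantor_space)
  (p : cantor_space * bool) : cantor_space * bool :=
  if (p.2 == false) && `[< A (T p.1) >] then (T p.1, true) else (T p.1, false).

Definition NxB_is (Tinv : cantor_space -> cantor_space) (B : set cantor_space)
  (x : cantor_space) (k : nat) : Prop :=
  B (iter k Tinv x) /\ (forall j, (j < k)%N -> ~ B (iter j Tinv x)).

Definition Uset (Tinv : cantor_space -> cantor_space) (B : set cantor_space) :
  set cantor_space := [set x | exists k, NxB_is Tinv B x k].

Definition graphN (Tinv : cantor_space -> cantor_space) (B : set cantor_space) :
  set (cantor_space * bool) :=
  [set p | exists k, NxB_is Tinv B p.1 k /\ p.2 = odd k].

(* X = closure of graphN in Xhat (relative closure = closure ∩ Xhat) *)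
Definition Xset (Tinv : cantor_space -> cantor_space) (A B : set cantor_space) :
  set (cantor_space * bool) :=
  closure (graphN Tinv B) `&` Xhat A B.

From HB Require Import structures.
From mathcomp Require Import all_boot all_order all_algebra.
From mathcomp Require Import all_classical all_reals all_analysis.
From mathcomp Require Import zify.
Import Order.TTheory GRing.Theory Num.Theory.
Local Open Scope classical_set_scope.

(* Write N for the first entrance time of the backward orbit into B = ~` A.
   Since N (T x) is N x + 1 when T x is in A and 0 when it is in B, the graph
   of x |-> N x mod 2 is f-invariant, so its closure X is a closed
   f^m-invariant set containing B x {0}.  Conversely let S be such a set and
   N x = k.  On a small open W around x we still have N = k, and V = T^-k W is
   an open subset of B.  Every point of the closed set B has a dense two-sided
   T^m-orbit, and in a compact perfect space this makes T^m forward transitive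
   from V: some T^(mj) u with u in V lands in W.  Then f^(mj) (u, 0) is the
   point (T^(mj) u, k mod 2) of S, close to (x, N x mod 2). *)

Lemma iter_can {X : Type} {f g : X -> X} n : cancel f g -> cancel (iter n f) (iter n g).
Proof. by move=> fK; elim: n => // n IH y; rewrite iterSr iterS fK. Qed.

Section IntegerIterates.
Variables (X : Type) (T Tinv : X -> X).
Hypothesis TinvK : cancel Tinv T.

Lemma zpowS (a : int) y : zpow T Tinv (a + 1)%R y = T (zpow T Tinv a y).
Proof.
case: a => [n|[|n]].
- by have -> : (Posz n + 1 = Posz n.+1)%R by lia.
- by rewrite /= TinvK.
- have -> : (Negz n.+1 + 1 = Negz n)%R by lia.
  by rewrite /= TinvK.
Qed.

Lemma zpowDn (a : int) (n : nat) y :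
  zpow T Tinv (a + n%:Z)%R y = iter n T (zpow T Tinv a y).
Proof.
elim: n => [|n IH] /=; first by rewrite addr0.
by rewrite -addn1 PoszD addrA zpowS /= IH.
Qed.

Lemma zpowMn (m : nat) (k : int) y :
  zpow T Tinv (m%:Z * k)%R y = zpow (iter m T) (iter m Tinv) k y.
Proof.
case: k => [n|n]; first by rewrite -PoszM /= mulnC iterM.
case: m => [|m]; first by rewrite mul0r /=; elim: n => //= n <-.
have -> : (m.+1%:Z * Negz n = Negz (m.+1 * n.+1).-1)%R by lia.
change (iter (m.+1 * n.+1).-1.+1 Tinv y = iter n.+1 (iter m.+1 Tinv) y).
by rewrite prednK ?muln_gt0 // mulnC iterM.
Qed.

End IntegerIterates.

Lemma continuous_iter {X : topologicalType} {f : X -> X} n :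
  continuous f -> continuous (iter n f).
Proof.
move=> fC; elim: n => [|n IH] x; first exact: cvg_id.
exact: continuous_comp (IH x) (fC _).
Qed.

Lemma closure_preimage {X Y : topologicalType} (g : X -> Y) (A : set Y) :
  continuous g -> closure (g @^-1` A) `<=` g @^-1` closure A.
Proof.
move=> gC; have /closure_id -> : closed (g @^-1` closure A).
  by move/continuous_closedP : gC; apply; exact: closed_closure.
by apply: closureS => x /=; exact: subset_closure.
Qed.

Lemma image_closure_sub {X : topologicalType} (g : X -> X) (A : set X) :
  continuous g -> g @` A `<=` A -> g @` closure A `<=` closure A.
Proof.
move=> gC gA _ [x Ax <-].
have AgA : A `<=` g @^-1` A by move=> y Ay; apply: gA; exists y.
exact: closure_preimage gC _ (closureS AgA Ax).
Qed.

Lemma perfect_setD1_neq0 {X : topologicalType} (O : set X) q :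
  perfect_set [set: X] -> open O -> O !=set0 -> O `\ q !=set0.
Proof.
move=> /perfectTP_ex Xperfect oO O0; have [x [y [Ox Oy xy]]] := Xperfect O oO O0.
have [xq|xq] := pselect (x = q); last by exists x.
by exists y; split => // yq; move: xy; rewrite xq yq eqxx.
Qed.

Lemma dense_range_far {X : topologicalType} {y : int -> X} n {O : set X} :
  accessible_space X -> perfect_set [set: X] -> dense (range y) ->
  open O -> O !=set0 -> exists2 i, (n <= `|i|)%N & O (y i).
Proof.
move=> XT1 Xperfect yD; elim: n O => [|n IH] O oO O0.
  by have [w [Ow [i _ yiw]]] := yD O O0 oO; exists i => //; rewrite yiw.
have oD1 a (U : set X) : open U -> open (U `\ a).
  by move=> oU; apply: openI oU _; rewrite openC; exact: accessible_closed_set1.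
have oOn := oD1 (y (Posz n)) _ oO.
have Dn := perfect_setD1_neq0 _ (y (Posz n)) Xperfect oO O0.
have [i ni [[Oi yi_n] yi_Nn]] := IH _ (oD1 (y (- Posz n)%R) _ oOn)
  (perfect_setD1_neq0 _ (y (- Posz n)%R) Xperfect oOn Dn).
exists i => //; case: (ltnP n `|i|) => // ile.
have : i = Posz n \/ i = (- Posz n)%R by lia.
by case=> ein; [case: yi_n | case: yi_Nn]; rewrite ein.
Qed.

Section TopologicalDynamics.
Context {X : topologicalType}.
Variables (S Sinv : X -> X).
Hypotheses (SC : continuous S) (SinvC : continuous Sinv).
Hypotheses (SK : cancel S Sinv) (SinvK : cancel Sinv S).

Definition omega_limit (z : X) := [set q : X | forall N, nbhs q N ->
  forall n0, exists2 n, (n0 <= n)%N & N (iter n S z)].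

Lemma omega_limitS z q : omega_limit z q -> omega_limit z (S q).
Proof.
move=> wq N /(SC q) /wq wN n0; have [n n0n SnN] := wN n0.
by exists n.+1; [exact: leqW | rewrite iterS].
Qed.

Lemma omega_limitSinv z q : omega_limit z q -> omega_limit z (Sinv q).
Proof.
move=> wq N /(SinvC q) /wq wN n0; have [[|n] n0n SinvN] := wN n0.+1 => //.
by exists n => //; move: SinvN; rewrite /= SK.
Qed.

Lemma omega_limit_zpow k z q :
  omega_limit z q -> omega_limit z (zpow S Sinv k q).
Proof.
move=> wq; case: k => k.
  by elim: k => //= k IH; exact: omega_limitS _ _ IH.
change (omega_limit z (iter k.+1 Sinv q)).
by elim: k.+1 => //= j IH; exact: omega_limitSinv _ _ IH.
Qed.

Lemma omega_limit_dense z q W : omega_limit z q ->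
  dense (range (fun k => zpow S Sinv k q)) -> open W -> W !=set0 ->
  exists n, W (iter n S z).
Proof.
move=> wq qD oW W0; have [w [Ww [k _ qk]]] := qD W W0 oW.
have WN : nbhs (zpow S Sinv k q) W by apply: open_nbhs_nbhs; split; rewrite ?qk.
by have [n _ Wn] := omega_limit_zpow k z q wq W WN 0; exists n.
Qed.

Lemma omega_limit_cluster z V : compact [set: X] ->
  (forall n0, exists2 n, (n0 <= n)%N & V (iter n S z)) ->
  exists2 q, closure V q & omega_limit z q.
Proof.
move=> Xcompact Vrec.
have /choice[g gP] : forall n0, exists n, (n0 <= n)%N /\ V (iter n S z).
  by move=> n0; have [n] := Vrec n0; exists n.
pose t n := iter (g n) S z.
have tF : ProperFilter (t @ \oo) by exact: fmap_proper_filter.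
have [q [_ qcl]] := Xcompact _ tF filterT.
exists q => [N qN|N qN n0].
  have tV : (t @ \oo) V by exists 0%N => // n _; exact: (gP n).2.
  exact: qcl tV qN.
have tail : (t @ \oo) [set y | exists2 n, (n0 <= n)%N & iter n S z = y].
  by exists n0 => // n /= n0n; exists (g n) => //; exact: leq_trans n0n (gP n).1.
by have [_ [[n n0n <-] Nn]] := qcl _ _ tail qN; exists n.
Qed.

(* Either V meets the orbit of z before its visit to W, or the orbit returns
   to V at arbitrarily late positive times; in the latter case an omega-limit
   point of z in closure V lies in E, so its dense orbit lies in the closed
   invariant set omega_limit z, which therefore meets W. *)
Lemma forward_transitive E V W :
  compact [set: X] -> accessible_space X -> perfect_set [set: X] ->
  closed E -> (forall x, E x -> dense (range (fun k => zpow S Sinv k x))) ->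
  open V -> V !=set0 -> V `<=` E -> open W -> W !=set0 ->
  exists2 u, V u & exists n, W (iter n S u).
Proof.
move=> Xcompact XT1 Xperfect Eclosed Edense oV [z Vz] VE oW W0.
pose y k := zpow S Sinv k z.
have yD : dense (range y) := Edense _ (VE _ Vz).
have [i0 _ Wi0] := dense_range_far 0 XT1 Xperfect yD oW W0.
have [[i Vi ii0]|i0_lt] := pselect (exists2 i, V (y i) & (i <= i0)%R).
  exists (y i) => //; exists `|i0 - i|%N.
  by rewrite /y -zpowDn //; have -> : (i + `|i0 - i|%N = i0)%R by lia.
have Vrec : forall n0, exists2 n, (n0 <= n)%N & V (iter n S z).
  move=> n0.
  have [i ni Vi] := dense_range_far (n0 + `|i0|) XT1 Xperfect yD oV (ex_intro _ z Vz).
  have i0i : (i0 < i)%R by rewrite ltNge; apply/negP => ii0; apply: i0_lt; exists i.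
  have [k ik] : exists k : nat, i = k by exists `|i|%N; lia.
  by exists k; [lia | rewrite ik in Vi].
have [q Vq wq] := omega_limit_cluster z V Xcompact Vrec.
have Eq : E q by rewrite (closure_id E).1 //; exact: closureS Vq.
by exists z => //; exact: omega_limit_dense z q W wq (Edense _ Eq) oW W0.
Qed.

End TopologicalDynamics.

Lemma setC_partition {T : Type} (A B : set T) :
  A `&` B = set0 -> A `|` B = setT -> B = ~` A.
Proof.
move=> AB0 ABT; apply/seteqP; split => x.
- by move=> Bx Ax; have : (A `&` B) x by []; rewrite AB0.
- move=> nAx; have : (A `|` B) x by rewrite ABT.
  by case.
Qed.

Section FirstEntranceTime.
Context {Tinv : cantor_space -> cantor_space} {B : set cantor_space}.

Lemma NxB_is0 y : NxB_is Tinv B y 0 <-> B y.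
Proof. by split=> [[]|By]. Qed.

Lemma NxB_isS y k :
  NxB_is Tinv B y k.+1 <-> ~ B y /\ NxB_is Tinv B (Tinv y) k.
Proof.
split=> [[Bk avoid]|[nBy [Bk avoid]]].
  split; first exact: avoid 0%N isT.
  by split=> [|j jk]; rewrite -iterSr //; exact: avoid j.+1 jk.
split=> [|[|j] jk //]; rewrite iterSr //; exact: avoid.
Qed.

Lemma NxB_is_uniq {y k k'} : NxB_is Tinv B y k -> NxB_is Tinv B y k' -> k = k'.
Proof.
move=> [Bk avoid] [Bk' avoid']; case: (ltngtP k k') => // kk'.
- by case: (avoid' _ kk').
- by case: (avoid _ kk').
Qed.

Lemma open_NxB_is k : continuous Tinv -> clopen B -> open [set y | NxB_is Tinv B y k].
Proof.
move=> TinvC [oB cB]; elim: k => [|k IH].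
  by rewrite (_ : [set y | _] = B) //; apply/seteqP; split=> y /NxB_is0.
rewrite (_ : [set y | _] = ~` B `&` Tinv @^-1` [set y | NxB_is Tinv B y k]).
  by apply: openI; [rewrite openC | move/continuousP : TinvC; apply].
by apply/seteqP; split=> y /NxB_isS.
Qed.

End FirstEntranceTime.

Lemma near_snd {Y : topologicalType} (p : Y * bool) : \forall q \near p, q.2 = p.2.
Proof. exact: (@cvg_snd _ _ _ _ _ [set p.2]). Qed.

Lemma near_clopen {Y Z : topologicalType} (g : Y -> Z) (A : set Z) p :
  continuous g -> clopen A -> \forall q \near p, A (g q) <-> A (g p).
Proof.
move=> gC [oA cA]; have [Agp|nAgp] := pselect (A (g p)).
  have : nbhs p (g @^-1` A) by apply: gC; exact: open_nbhs_nbhs.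
  by apply: filterS => q /= Agq.
have : nbhs p (g @^-1` (~` A)) by apply: gC; apply: open_nbhs_nbhs; split; rewrite ?openC.
by apply: filterS => q /= nAgq.
Qed.

Lemma fmapXE T A p : fmapX T A p = (T p.1, (p.2 == false) && `[< A (T p.1) >]).
Proof. by rewrite /fmapX; case: ifP. Qed.

Lemma continuous_fmapX T A : continuous T -> clopen A -> continuous (fmapX T A).
Proof.
move=> TC Aclopen p; pose c := (p.2 == false) && `[< A (T p.1) >].
have TfstC : continuous (T \o @fst cantor_space bool).
  by move=> q; apply: continuous_comp (TC q.1); exact: cvg_fst.
have fmapX_near : \forall q \near p, (T q.1, c) = fmapX T A q.
  near=> q.
  have q2 : q.2 = p.2 by near: q; exact: near_snd.
  have Aq : A (T q.1) <-> A (T p.1) by near: q; exact: (near_clopen _ _ p TfstC Aclopen).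
  by rewrite fmapXE q2 (asbool_equiv_eq Aq).
have gC : {for p, continuous (fun q => (T q.1, c))}.
  exact: cvg_pair (TfstC p) (cvg_cst _).
rewrite /continuous_at [X in _ --> X]fmapXE.
exact: cvg_trans (near_eq_cvg fmapX_near) gC.
Unshelve. all: by end_near.
Qed.

Section Graph.
Context {T Tinv : cantor_space -> cantor_space} {A : set cantor_space}.
Hypothesis TK : cancel T Tinv.

Lemma iter_fmapX_fst n p : (iter n (fmapX T A) p).1 = iter n T p.1.
Proof. by elim: n => //= n <-; rewrite fmapXE. Qed.

Lemma graphN_fmapX p : graphN Tinv (~` A) p -> graphN Tinv (~` A) (fmapX T A p).
Proof.
case: p => y _ [k [/= yk ->]]; rewrite fmapXE /=.
have [ATy|nATy] := pselect (A (T y)).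
  exists k.+1; rewrite asboolT //=; split; last by case: (odd k).
  by apply/NxB_isS; split; [move/(_ ATy) | rewrite TK].
by exists 0%N; rewrite (asboolF nATy) andbF; split => //; exact/NxB_is0.
Qed.

Lemma graphN_iter n p :
  graphN Tinv (~` A) p -> graphN Tinv (~` A) (iter n (fmapX T A) p).
Proof. by move=> Gp; elim: n => //= n; exact: graphN_fmapX. Qed.

Lemma graphN_snd p k :
  graphN Tinv (~` A) p -> NxB_is Tinv (~` A) p.1 k -> p.2 = odd k.
Proof. by move=> [k' [pk' ->]] pk; rewrite (NxB_is_uniq pk' pk). Qed.

Lemma graphN_Xhat : graphN Tinv (~` A) `<=` Xhat A (~` A).
Proof.
move=> [y _] [[|k] [/= yk ->]]; have [Ay|nAy] := pselect (A y).
- by left.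
- by right; split => //; exact/NxB_is0.
- by left.
- by case/NxB_isS: yk => /(_ nAy).
Qed.

Lemma closed_Xhat : closed A -> closed (Xhat A (~` A)).
Proof.
move=> cA; rewrite (_ : Xhat _ _ = fst @^-1` A `|` snd @^-1` [set false]).
  apply: closedU; apply: preimage_closed.
  - by move=> ? _; exact: cvg_fst.
  - exact: cA.
  - by move=> ? _; exact: cvg_snd.
  - exact: discrete_closed.
apply/seteqP; split=> [[y b]|[y b]] /=; first by case=> [|[]]; [left | right].
by case=> [|->]; [left | have [|] := pselect (A y); [left | right]].
Qed.

Lemma closure_graphN_Xhat : closed A ->
  closure (graphN Tinv (~` A)) `<=` Xhat A (~` A).
Proof.
by move=> cA; rewrite closureE; apply: smallest_sub; [exact: closed_Xhat | exact: graphN_Xhat].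
Qed.

Lemma Xset_closure : closed A -> Xset Tinv A (~` A) = closure (graphN Tinv (~` A)).
Proof. by move=> cA; apply: setIidl; exact: closure_graphN_Xhat. Qed.

End Graph.

Section MinimalInvariantSet.
Context {T Tinv : cantor_space -> cantor_space} {x0 : cantor_space}.
Context {A : set cantor_space} {m : nat}.
Hypotheses (TC : continuous T) (TinvC : continuous Tinv).
Hypotheses (TK : cancel T Tinv) (TinvK : cancel Tinv T).
Hypothesis Tdense : forall x, x <> x0 -> forall m : nat, (0 < m)%N ->
  dense [set zpow T Tinv (m%:Z * k)%R x | k in [set: int]].
Hypotheses (Aclopen : clopen A) (Ax0 : A x0) (m_gt0 : (0 < m)%N).

Let Tm := iter m T.
Let fm := iter m (fmapX T A).

Let setC_clopen : clopen (~` A).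
Proof. by case: Aclopen => oA cA; rewrite /clopen openC closedC. Qed.

Lemma forward_transitive_setC V W : open V -> V !=set0 -> V `<=` ~` A ->
  open W -> W !=set0 -> exists2 u, V u & exists j, W (iter j Tm u).
Proof.
move=> oV V0 VA oW W0.
apply: (forward_transitive _ _ (continuous_iter m TC) (continuous_iter m TinvC)
  (iter_can m TK) (iter_can m TinvK) _ _ _ cantor_space_compact
  (hausdorff_accessible cantor_space_hausdorff) cantor_perfect setC_clopen.2 _
  oV V0 VA oW W0).
move=> x nAx; have xx0 : x <> x0 by move=> ex; apply: nAx; rewrite ex.
rewrite (_ : (fun k => _) = fun k => zpow T Tinv (m%:Z * k)%R x).
  exact: Tdense.
by apply/funext => k; rewrite zpowMn.
Qed.

Lemma closure_graphN_invariant :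
  fm @` closure (graphN Tinv (~` A)) `<=` closure (graphN Tinv (~` A)).
Proof.
apply: image_closure_sub; first exact/continuous_iter/continuous_fmapX.
by move=> _ [p Gp <-]; exact: graphN_iter.
Qed.

Lemma graphN_sub_invariant S : closed S ->
  [set p | (~` A) p.1 /\ p.2 = false] `<=` S -> fm @` S `<=` S ->
  graphN Tinv (~` A) `<=` S.
Proof.
move=> Sclosed BS Sinv [x _] [k [/= xk ->]].
have pairC : continuous (fun y : cantor_space => (y, odd k)).
  by move=> y; exact: cvg_pair cvg_id (cvg_cst _).
rewrite (closure_id S).1 //; apply: (closure_preimage _ S pairC).
move=> P; rewrite nbhsE => -[P' [oP' P'x] P'P].
pose W := P' `&` [set y | NxB_is Tinv (~` A) y k].
have oW : open W by apply: openI => //; exact: open_NxB_is k TinvC setC_clopen.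
pose V := iter k T @^-1` W.
have oV : open V by move/continuousP : (continuous_iter k TC); apply.
have VB : V `<=` ~` A by move=> v [_ /= [+ _]]; rewrite (iter_can k TK).
have V0 : V !=set0 by exists (iter k Tinv x); split; rewrite /= (iter_can k TinvK).
have [u Vu [j Wj]] :=
  forward_transitive_setC V W oV V0 VB oW (ex_intro _ x (conj P'x xk)).
have Sorbit n : S (iter n fm (u, false)).
  elim: n => [|n IH]; first by apply: BS; split => //; exact: VB.
  by apply: Sinv; exists (iter n fm (u, false)).
pose p := iter j fm (u, false).
have p1 : p.1 = iter j Tm u by rewrite /p -iterM iter_fmapX_fst iterM.
have Gp : graphN Tinv (~` A) p.
  rewrite /p -iterM; apply: (graphN_iter TK).
  by exists 0%N; split => //; apply/NxB_is0; exact: VB.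
have p2 : p.2 = odd k by apply: graphN_snd Gp _; rewrite p1; exact: Wj.2.
exists p.1; split; last by apply: P'P; rewrite p1; exact: Wj.1.
by rewrite /= -p2 -surjective_pairing; exact: Sorbit.
Qed.

End MinimalInvariantSet.

Theorem lemma7p1 (T Tinv : cantor_space -> cantor_space) (x0 : cantor_space)
  (A B : set cantor_space) :
  continuous T -> continuous Tinv -> cancel T Tinv -> cancel Tinv T ->
  T x0 = x0 -> (forall x, T x = x -> x = x0) ->
  (forall x, x <> x0 -> forall m : nat, (0 < m)%N ->
     dense [set zpow T Tinv (m%:Z * k)%R x | k in [set: int]]) ->
  clopen A -> clopen B -> A `&` B = set0 -> A `|` B = setT -> A x0 ->
  forall m : nat, (0 < m)%N ->
    [/\ closed (Xset Tinv A B), Xset Tinv A B `<=` Xhat A B,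
        [set p | B p.1 /\ p.2 = false] `<=` Xset Tinv A B,
        image (Xset Tinv A B) (iter m (fmapX T A)) `<=` Xset Tinv A B &
        forall S : set (cantor_space * bool),
          closed S -> S `<=` Xhat A B -> [set p | B p.1 /\ p.2 = false] `<=` S ->
          image S (iter m (fmapX T A)) `<=` S -> Xset Tinv A B `<=` S].
Proof.
move=> TC TinvC TK TinvK _ _ Tdense Aclopen _ AB0 ABT Ax0 m m_gt0.
have [_ cA] := Aclopen.
rewrite (setC_partition _ _ AB0 ABT) Xset_closure //; split.
- exact: closed_closure.
- exact: closure_graphN_Xhat.
- move=> [y b] [/= nAy ->]; apply: subset_closure.
  by exists 0%N; split => //; exact/NxB_is0.
- exact: closure_graphN_invariant.
- move=> S Sclosed _ BS Sinv; rewrite closureE; apply: smallest_sub => //.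
  exact: graphN_sub_invariant TC TinvC TK TinvK Tdense Aclopen Ax0 m_gt0 S Sclosed BS Sinv.
Qed.
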